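(* For every integer $k \geq 2$ there is an MSyDS $\mathcal{S}_k$ with $k$ layers, in which every local function is a threshold function and every master function is \texttt{OR}, with the following properties: (1) there is no MSyDS with fewer than $k$ layers, on the same node set, in which every local function is a symmetric Boolean function and every master function is \texttt{OR}, that is equivalent to $\mathcal{S}_k$; (2) there is an MSyDS with two layers, on the same node set, in which every local function is a threshold function and every master function is \texttt{AND}, that is equivalent to $\mathcal{S}_k$.
   Context: A multilayer synchronous dynamical system (MSyDS) $\mathcal{S}$ over $\mathbb{B}=\{0,1\}$ with $k\ge 1$ layers consists of: a finite node set $V$; undirected simple graphs $G_i=(V,E_i)$, $1\le i\le k$ (all layers share the node set $V$); for each layer $i$ and node $v$ a local function $f_{i,v}$ with output in $\mathbb{B}$ whose inputs are the states of the nodes in the closed neighborhood of $v$ in $G_i$ ($v$ and its neighbors in $G_i$); and for each node $v$ a master function $\psi_v:\mathbb{B}^k\to\mathbb{B}$. A configuration is a map $\mathcal{C}:V\to\mathbb{B}$; its successor is $\mathcal{C}'$ with $\mathcal{C}'(v)=\psi_v(f_{1,v}(\mathcal{C}),\dots,f_{k,v}(\mathcal{C}))$ for all $v$ (synchronous update), where $f_{i,v}(\mathcal{C})$ is $f_{i,v}$ evaluated on the states in $\mathcal{C}$ of the closed neighborhood of $v$ in $G_i$. The phase space is the directed graph on all configurations with an arc from each configuration to its successor. Two MSyDSs on the same node set are equivalent if their phase spaces are identical. For an integer $\tau\ge 0$, the $\tau$-threshold function equals 1 iff at least $\tau$ of its inputs equal 1 (a threshold exceeding the number of inputs gives the constant-0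 function); a threshold function is a $\tau$-threshold function for some $\tau\ge 0$. A Boolean function is symmetric if its value depends only on the number of 1's among its inputs. \texttt{OR} is 1 iff at least one input is 1; \texttt{AND} is 1 iff all inputs are 1. *)

From mathcomp Require Import all_boot.
Set Implicit Arguments. Unset Strict Implicit. Unset Printing Implicit Defensive.

Definition config (V : finType) := V -> bool.

Definition cnbhd (V : finType) (e : rel V) (v : V) : pred V :=
  fun u => (u == v) || e v u.

(* Layer i is an undirected simple graph (symmetric irreflexive relation);
   the local function of node v in layer i only depends on the states of the
   closed neighbourhood of v in layer i; master functions take k bits. *)
Record msyds (V : finType) (k : nat) := MSyDS {
  layer : 'I_k -> rel V;
  layer_sym : forall i, symmetric (layer i);
  layer_irr : forall i, irreflexive (layer i);
  local : 'I_k -> V -> config V -> bool;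
  local_dep : forall i v (C C' : config V),
      (forall u, cnbhd (layer i) v u -> C u = C' u) -> local i v C = local i v C';
  master : V -> {ffun 'I_k -> bool} -> bool
}.

Definition ones_in (V : finType) (e : rel V) (v : V) (C : config V) : nat :=
  #|[pred u | cnbhd e v u && C u]|.

Definition succ (V : finType) (k : nat) (S : msyds V k) (C : config V) : config V :=
  fun v => master S v [ffun i => local S i v C].

(* equivalence: identical phase spaces, i.e. identical successor maps *)
Definition equivalent (V : finType) (k1 k2 : nat) (S1 : msyds V k1) (S2 : msyds V k2) :=
  forall (C : config V) (v : V), succ S1 C v = succ S2 C v.

Definition all_threshold (V : finType) (k : nat) (S : msyds V k) :=
  forall i v, exists tau : nat,
    forall C, local S i v C = (tau <= ones_in (layer S i) v C).

Definition all_symmetric (V : finType) (k : nat) (S : msyds V k) :=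
  forall i v, exists g : nat -> bool,
    forall C, local S i v C = g (ones_in (layer S i) v C).

Definition all_master_OR (V : finType) (k : nat) (S : msyds V k) :=
  forall v (b : {ffun 'I_k -> bool}), master S v b = [exists i, b i].

Definition all_master_AND (V : finType) (k : nat) (S : msyds V k) :=
  forall v (b : {ffun 'I_k -> bool}), master S v b = [forall i, b i].

From mathcomp Require Import all_boot.
Set Implicit Arguments. Unset Strict Implicit. Unset Printing Implicit Defensive.

(* The k-layer system is a star with centre None and leaves Some i, layer i being the single
   edge {None, Some i}, with threshold 2 at the centre and 0 at the leaves.  Under OR the leaves
   always become 1 and the centre becomes 1 iff it is 1 together with some leaf.  Two AND-combined
   layers give the same map: an empty layer with threshold 1 (the centre is 1) and the full star
   with threshold 2 (some leaf is 1 as well).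
   Conversely, let an OR of symmetric local functions realise this map at the centre v.  Each leaf
   u needs a layer j, adjacent to u, whose local function at v fires on {v, u} but not on {v}.
   If two leaves u, w shared such a layer, that function would also see two 1's on {u, w} and
   fire, while v must then become 0.  So leaves inject into layers. *)

Lemma leq_card_witness (T J : finType) (U : {set T}) (R : T -> J -> bool) :
    (forall u, u \in U -> exists j, R u j) ->
    (forall j, {in U &, forall u w, R u j -> R w j -> u = w}) ->
  #|U| <= #|J|.
Proof.
move=> witness unique; have [-> | [u0 u0U]] := set_0Vmem U; first by rewrite cards0.
have [j0 _] := witness u0 u0U.
pose f u := odflt j0 [pick j | R u j].
have Rf u : u \in U -> R u (f u).
  by move=> uU; rewrite /f; case: pickP => [//|noR]; have [j] := witness u uU; rewrite noR.
apply: (@leq_card_in _ _ f) => u w uU wU fuw.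
by apply: (unique (f u)) => //; [exact: Rf | rewrite fuw; exact: Rf].
Qed.

Definition config_of (V : finType) (A : {set V}) : config V := fun x => x \in A.

Lemma ones_in_dep (V : finType) (e : rel V) v (C C' : config V) :
  (forall u, cnbhd e v u -> C u = C' u) -> ones_in e v C = ones_in e v C'.
Proof.
move=> eqC; apply: eq_card => u; rewrite !inE.
by case cu: (cnbhd e v u); rewrite //= eqC.
Qed.

Lemma ones_in_config_of (V : finType) (e : rel V) v (A : {set V}) :
  (forall u, u \in A -> cnbhd e v u) -> ones_in e v (config_of A) = #|A|.
Proof.
move=> sub; apply: eq_card => u; rewrite !inE /config_of.
by case: (boolP (u \in A)) => [/sub -> | _]; rewrite ?andbF.
Qed.

Lemma succ_OR (V : finType) k (S : msyds V k) :
  all_master_OR S -> forall C v, succ S C v = [exists j, local S j v C].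
Proof. by move=> orS C v; rewrite /succ orS; apply: eq_existsb => j; rewrite ffunE. Qed.

Lemma succ_AND (V : finType) k (S : msyds V k) :
  all_master_AND S -> forall C v, succ S C v = [forall j, local S j v C].
Proof. by move=> andS C v; rewrite /succ andS; apply: eq_forallb => j; rewrite ffunE. Qed.

Section OrSymmetricLowerBound.
Variables (V : finType) (k : nat) (S : msyds V k).
Hypotheses (symS : all_symmetric S) (orS : all_master_OR S).

Lemma local_eq_of_ones_in j v (C C' : config V) :
  ones_in (layer S j) v C = ones_in (layer S j) v C' -> local S j v C = local S j v C'.
Proof. by have [g gE] := symS j v; rewrite !gE => ->. Qed.

Variables (v : V) (U : {set V}).
Hypotheses (vNU : v \notin U)
  (succ_v : forall C, succ S C v = C v && [exists u in U, C u]).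

Lemma local_center_only j : local S j v (config_of [set v]) = false.
Proof.
apply/negbTE/negP => loc; have := succ_v (config_of [set v]).
rewrite (succ_OR orS) (introT existsP (ex_intro _ j loc)) /config_of inE eqxx.
move=> /esym/existsP [u /andP [uU /set1P uv]].
by move: vNU; rewrite -uv uU.
Qed.

Lemma leaf_witness u : u \in U ->
  exists j, layer S j v u && local S j v (config_of [set v; u]).
Proof.
move=> uU; have := succ_v (config_of [set v; u]).
have -> : config_of [set v; u] v && [exists w in U, config_of [set v; u] w].
  by rewrite /config_of !inE eqxx; apply/existsP; exists u; rewrite uU !inE eqxx orbT.
rewrite (succ_OR orS) => /existsP [j loc]; exists j; rewrite loc andbT.
apply: contraTT loc => /negbTE notadj.
rewrite (local_eq_of_ones_in (C' := config_of [set v])) ?local_center_only //.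
apply: ones_in_dep => x; rewrite /cnbhd /config_of !inE.
case: (eqVneq x u) => [-> | _]; last by rewrite orbF.
by rewrite notadj orbF orbT => ->.
Qed.

Lemma neq_center u : u \in U -> v != u.
Proof. by move=> uU; apply: contraNneq vNU => ->. Qed.

Lemma leaf_witness_unique j : {in U &, forall u w,
  layer S j v u && local S j v (config_of [set v; u]) ->
  layer S j v w && local S j v (config_of [set v; w]) -> u = w}.
Proof.
move=> u w uU wU /andP [adj_u loc] /andP [adj_w _]; case: (eqVneq u w) => // uw; exfalso.
have := succ_v (config_of [set u; w]).
have -> : config_of [set u; w] v = false.
  by rewrite /config_of !inE (negbTE (neq_center uU)) (negbTE (neq_center wU)).
rewrite (succ_OR orS) => /negbT/existsPn/(_ j)/negP; apply.
rewrite (local_eq_of_ones_in (C' := config_of [set v; u])) //.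
rewrite !ones_in_config_of ?cards2 ?uw ?neq_center // => x;
  by rewrite /cnbhd !inE => /orP [] /eqP ->; rewrite ?eqxx ?adj_u ?adj_w ?orbT.
Qed.

Lemma card_leaves_le_layers : #|U| <= k.
Proof.
rewrite -[k]card_ord; apply: leq_card_witness leaf_witness _.
exact: leaf_witness_unique.
Qed.
End OrSymmetricLowerBound.

Section Star.
Variable T : finType.

Definition star (A : pred T) : rel (option T) := fun x y =>
  match x, y with
  | None, Some b => A b
  | Some a, None => A a
  | _, _ => false
  end.

Lemma star_sym A : symmetric (star A).
Proof. by case=> [a|] [b|]. Qed.

Lemma star_irr A : irreflexive (star A).
Proof. by case. Qed.

Lemma ones_in_star_center A (C : config (option T)) :
  ones_in (star A) None C = C None + #|[pred a | A a && C (Some a)]|.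
Proof.
rewrite /ones_in (cardD1 None) !inE /cnbhd eqxx /=; congr (_ + _).
have some_inj : injective (@Some T) by move=> ? ? [].
rewrite -(card_image some_inj); apply: eq_card => -[a|]; rewrite !inE /=.
  by rewrite mem_image.
by apply/esym/imageP => -[].
Qed.
End Star.

Section ThresholdSystem.
Variables (V : finType) (k : nat) (E : 'I_k -> rel V).
Hypotheses (Esym : forall i, symmetric (E i)) (Eirr : forall i, irreflexive (E i)).
Variables (tau : 'I_k -> V -> nat) (m : V -> {ffun 'I_k -> bool} -> bool).

Definition threshold_local i v (C : config V) := tau i v <= ones_in (E i) v C.

Lemma threshold_local_dep i v (C C' : config V) :
  (forall u, cnbhd (E i) v u -> C u = C' u) ->
  threshold_local i v C = threshold_local i v C'.
Proof. by move=> eqC; rewrite /threshold_local (ones_in_dep eqC). Qed.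

Definition threshold_msyds : msyds V k :=
  MSyDS Esym Eirr threshold_local_dep m.

Lemma threshold_msyds_threshold : all_threshold threshold_msyds.
Proof. by move=> i v; exists (tau i v). Qed.
End ThresholdSystem.

Section StarSystem.
Variables (T : finType) (k : nat) (A : 'I_k -> pred T) (tau : 'I_k -> nat).
Variable m : option T -> {ffun 'I_k -> bool} -> bool.

Definition star_msyds : msyds (option T) k :=
  threshold_msyds (fun i => star_sym (A i)) (fun i => star_irr (A i))
    (fun i v => if v is None then tau i else 0) m.

Lemma star_local_leaf i a C : local star_msyds i (Some a) C.
Proof. by []. Qed.

Lemma star_local_center i C :
  local star_msyds i None C = (tau i <= C None + #|[pred a | A i a && C (Some a)]|).
Proof. by rewrite /= /threshold_local ones_in_star_center. Qed.
End StarSystem.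

Lemma card_pred1_and (T : finType) (i : T) (P : pred T) :
  #|[pred a | (a == i) && P a]| = P i.
Proof.
case Pi: (P i); last by apply: eq_card0 => a; rewrite !inE; case: eqP => // ->.
by rewrite /= -(card1 i); apply: eq_card => a; rewrite !inE; case: eqP => // ->.
Qed.

Definition or_star k : msyds (option 'I_k) k :=
  star_msyds (fun i => pred1 i) (fun _ => 2) (fun _ b => [exists i, b i]).

Definition and_star k : msyds (option 'I_k) 2 :=
  star_msyds (fun (i : 'I_2) (_ : 'I_k) => i != ord0) (fun i => i.+1)
    (fun _ b => [forall i, b i]).

Lemma succ_or_star_center k C :
  succ (or_star k) C None = C None && [exists i, C (Some i)].
Proof.
rewrite succ_OR //.
under eq_existsb => i do rewrite star_local_center card_pred1_and.
case: (C None) => /=; first by apply: eq_existsb => i; case: (C (Some i)).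
by apply/negbTE/existsPn => i; case: (C (Some i)).
Qed.

Lemma forall_ord2 (P : pred 'I_2) : [forall i, P i] = P ord0 && P ord_max.
Proof.
apply/forallP/andP => [P_all | [P0 P1] [[|[|//]] lt_i2]]; first by rewrite !P_all.
  by rewrite (_ : Ordinal lt_i2 = ord0) //; apply: val_inj.
by rewrite (_ : Ordinal lt_i2 = ord_max) //; apply: val_inj.
Qed.

Lemma succ_and_star_center k C :
  succ (and_star k) C None = C None && [exists i, C (Some i)].
Proof.
rewrite succ_AND // forall_ord2 !star_local_center /= (@eq_card0 _ [pred: 'I_k | false]) //.
case: (C None) => //=; rewrite add1n ltnS.
by apply/card_gt0P/existsP => -[i]; exists i.
Qed.

Lemma succ_or_star_leaf k C (a : 'I_k) : succ (or_star k) C (Some a).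
Proof. by rewrite succ_OR //; apply/existsP; exists a; apply: star_local_leaf. Qed.

Lemma succ_and_star_leaf k C (a : 'I_k) : succ (and_star k) C (Some a).
Proof. by rewrite succ_AND //; apply/forallP => i; apply: star_local_leaf. Qed.

Lemma or_star_equiv_and_star k : equivalent (or_star k) (and_star k).
Proof.
move=> C [a|]; first by rewrite succ_or_star_leaf succ_and_star_leaf.
by rewrite succ_or_star_center succ_and_star_center.
Qed.

Lemma exists_leaf (T : finType) (C : config (option T)) :
  [exists u in [set~ None], C u] = [exists a, C (Some a)].
Proof.
apply/existsP/existsP => [[[a /andP [_ Ca] | ]] | [a Ca]]; first by exists a.
  by rewrite setC11.
by exists (Some a); rewrite in_setC1 Ca.
Qed.

Theorem theorem6p2 :
  forall k : nat, 2 <= k ->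
  exists (V : finType) (S : msyds V k),
    all_threshold S /\ all_master_OR S /\
    (forall (k' : nat) (S' : msyds V k'), 1 <= k' -> k' < k ->
        all_symmetric S' -> all_master_OR S' -> ~ equivalent S S') /\
    (exists S2 : msyds V 2,
        all_threshold S2 /\ all_master_AND S2 /\ equivalent S S2).
Proof.
move=> k _; exists (option 'I_k), (or_star k).
split; first exact: threshold_msyds_threshold.
split=> //; split; last first.
  exists (and_star k); split; first exact: threshold_msyds_threshold.
  by split=> //; apply: or_star_equiv_and_star.
move=> k' S' _ lt_k'k symS' orS' equivS'.
have succ_center C : succ S' C None = C None && [exists u in [set~ None], C u].
  by rewrite -equivS' succ_or_star_center exists_leaf.
have := card_leaves_le_layers symS' orS' (negbT (setC11 None)) succ_center.
by rewrite cardsC1 card_option card_ord leqNgt lt_k'k.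
Qed.
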